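(* Let $\Omega_1,\Omega_2\subset\mathbb{R}^n$ be bounded measurable sets, $\Omega:=\Omega_1\times\Omega_2$, and let $\Phi$ be a quasi-Young's function satisfying either (1) there is $C>0$ with $\Phi(xy)\le C\,\Phi(x)\Phi(y)$ for all $x,y\ge 0$; or (2) there are $C_1,C_2\ge 0$ with $\Phi(xy)\le C_1\,x\,\Phi(y)+C_2\,\Phi(x)\,y$ for all $x,y\ge0$, and $\Phi(t)/t\to\infty$ as $t\to\infty$. If $\mu_i\in L^\Phi(\Omega_i)$ for $i=1,2$, then $\mu_1\otimes\mu_2\in L^\Phi(\Omega)$, where $(\mu_1\otimes\mu_2)(x_1,x_2):=\mu_1(x_1)\mu_2(x_2)$.
   Context: A Young's function is a function of the form $\Phi(t)=\int_0^t\varphi(s)\,ds$ for $t\ge 0$, where $\varphi:[0,\infty)\to[0,\infty]$ is increasing and lower semicontinuous with $\varphi(0)=0$, and $\varphi$ is neither identically zero nor identically $+\infty$ on $(0,\infty)$. A quasi-Young's function induced by a Young's function $\Phi$ is a convex, lower semicontinuous function $\check\Phi:[0,\infty)\to(-\infty,\infty]$, bounded from below, for which there is $t_0\ge 0$ with $\check\Phi(t)=\Phi(t)-\Phi(t_0)$ for all $t\ge t_0$ and $\check\Phi(t)\le 0$ for all $t<t_0$ (every Young's function is a quasi-Young's function, with $t_0=0$). For a measurable set $U\subset\mathbb{R}^d$ and a quasi-Young's function $\Phi$, the Luxemburg norm of a measurable $f:U\to\mathbb{R}$ is $\|f\|_\Phi:=\inf\{\lambda\ge 0:\int_U\Phi(|f|/\lambda)\,dx\le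 1\}$, and the Orlicz space is $L^\Phi(U):=\{f:U\to\mathbb{R}\text{ measurable}:\|f\|_\Phi<\infty\}$. *)

From HB Require Import structures.
From mathcomp Require Import all_boot all_order all_algebra.
From mathcomp Require Import all_classical all_reals all_analysis.

Set Implicit Arguments.
Unset Strict Implicit.
Unset Printing Implicit Defensive.

Import Order.TTheory GRing.Theory Num.Theory.
Import numFieldNormedType.Exports.

Local Open Scope classical_set_scope.
Local Open Scope ring_scope.
Local Open Scope ereal_scope.

(* All functions below are R -> \bar R; only their values on [0, +oo) matter. *)

Definition nondecr0 {R : realType} (f : R -> \bar R) : Prop :=
  forall s t : R, (0 <= s)%R -> (s <= t)%R -> f s <= f t.

Definition lsc0 {R : realType} (f : R -> \bar R) : Prop :=
  forall s : R, (0 <= s)%R -> forall a : \bar R, a < f s ->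
    \forall t \near s, (0 <= t)%R -> a < f t.

Definition convex0 {R : realType} (f : R -> \bar R) : Prop :=
  forall (x y l : R), (0 <= x)%R -> (0 <= y)%R -> (0 <= l <= 1)%R ->
    f (l * x + (1 - l) * y)%R <= l%:E * f x + (1 - l)%:E * f y.

Definition isYoung {R : realType} (Phi : R -> \bar R) : Prop :=
  exists phi : R -> \bar R,
    [/\ (forall s : R, (0 <= s)%R -> 0 <= phi s),
        nondecr0 phi, lsc0 phi, phi 0%R = 0 &
        (exists s : R, (0 < s)%R /\ phi s != 0)] /\
    [/\
        (exists s : R, (0 < s)%R /\ phi s != +oo) &
        (forall t : R, (0 <= t)%R ->
           Phi t = \int[@lebesgue_measure R]_(s in `[0%R, t]) phi s)].

Definition isQuasiYoung {R : realType} (Psi : R -> \bar R) : Prop :=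
  exists Phi : R -> \bar R, isYoung Phi /\
    [/\ (forall t : R, (0 <= t)%R -> Psi t != -oo),
        convex0 Psi, lsc0 Psi,
        (exists m : R, forall t : R, (0 <= t)%R -> m%:E <= Psi t) &
        exists t0 : R,
          [/\ (0 <= t0)%R, Phi t0 \is a fin_num,
              (forall t : R, (t0 <= t)%R -> Psi t = Phi t - Phi t0) &
              (forall t : R, (0 <= t)%R -> (t < t0)%R -> Psi t <= 0)]].

Definition luxemburg_norm {d} {T : measurableType d} {R : realType}
    (mu : {measure set T -> \bar R}) (U : set T) (Psi : R -> \bar R)
    (f : T -> R) : \bar R :=
  ereal_inf [set l%:E | l in
    [set l : R | (0 < l)%R /\
       \int[mu]_(x in U) Psi (`|f x| / l)%R <= 1]].

Definition in_Orlicz {d} {T : measurableType d} {R : realType}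
    (mu : {measure set T -> \bar R}) (U : set T) (Psi : R -> \bar R)
    (f : T -> R) : Prop :=
  measurable_fun U f /\ luxemburg_norm mu U Psi f < +oo.

From HB Require Import structures.
From mathcomp Require Import all_boot all_order all_algebra.
From mathcomp Require Import all_classical all_reals all_analysis.
From mathcomp Require Import measurable_realfun.
From mathcomp Require Import lra.

Import Order.TTheory GRing.Theory Num.Theory.
Import numFieldNormedType.Exports.

Local Open Scope classical_set_scope.
Local Open Scope ring_scope.
Local Open Scope ereal_scope.

(* Choose l_i > 0 with int Phi(|mu_i| / l_i) <= 1 and put a = |mu_1| / l_1,
   b = |mu_2| / l_2.  Either growth condition dominates Phi(a(x) b(y)) by a sum
   of products F(x) G(y) of integrable functions: under (1) by
   C Phi(a)^+ Phi(b)^+ plus a constant (Phi is bounded below and the sets have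
   finite measure), under (2) by C1 a Phi(b)^+ + C2 Phi(a)^+ b, where a and b
   are integrable because Phi is superlinear.  By Tonelli the positive part of
   Phi(a b) has a finite integral I over Omega_1 x Omega_2; convexity and
   Phi(0) <= 0 give Phi(s / K) <= Phi(s) / K for K >= 1, so K = max(1, I)
   yields int Phi(a b / K) <= 1, i.e. the Luxemburg norm is at most l_1 l_2 K. *)

Lemma measurable_normr_divr {R : realType} {d} {T : measurableType d}
    {A : set T} {f : T -> R} (c : R) :
  measurable_fun A f -> measurable_fun A (fun x => `|f x| / c)%R.
Proof.
move=> mf; apply: measurable_funM; last exact: measurable_cst.
exact: measurableT_comp (@normr_measurable R setT) mf.
Qed.

Lemma in_Orlicz_scale {R : realType} {d} {T : measurableType d}
    {mu : {measure set T -> \bar R}} {U : set T} {Psi : R -> \bar R} {f : T -> R} :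
  in_Orlicz mu U Psi f ->
  exists2 l : R, (0 < l)%R & \int[mu]_(x in U) Psi (`|f x| / l)%R <= 1.
Proof. by case=> _ /ereal_inf_lt[_ [l [l_gt0 int_le1] <-] _]; exists l. Qed.

Lemma superlinear_ge_id {R : realType} (Psi : R -> \bar R) :
  (fun t : R => Psi t * (t^-1)%:E) @ +oo%R --> +oo ->
  exists2 t0 : R, (0 < t0)%R & forall t, (t0 <= t)%R -> t%:E <= Psi t.
Proof.
move=> /cvgeyPge /(_ 1%R) [M [M_real M_le]].
have t0_gt0 : (0 < `|M| + 1)%R by rewrite ltr_wpDl.
exists (`|M| + 1)%R => // t t0_le_t.
have t_gt0 : (0 < t)%R by apply: lt_le_trans t0_le_t.
have M_lt_t : (M < t)%R.
  by apply: le_lt_trans (real_ler_norm M_real) (lt_le_trans _ t0_le_t); rewrite ltrDl.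
have := M_le t M_lt_t; case: (Psi t) => [r||] /=.
- by rewrite -EFinM !lee_fin ler_pdivlMr// mul1r.
- by rewrite leey.
- by rewrite mulNyr gtr0_sg ?invr_gt0// mul1e leeNy_eq.
Qed.

Section quasi_young.
Context {R : realType} {Psi : R -> \bar R}.
Hypothesis hPsi : isQuasiYoung Psi.

Lemma quasiYoung0_le0 : Psi 0%R <= 0.
Proof.
case: hPsi => Phi [_ [_ _ _ _ [t0 [t0_ge0 Phit0_fin Psi_eq Psi_le0]]]].
have [t0_gt0|t0_le0] := ltP 0%R t0; first exact: Psi_le0.
have -> : 0%R = t0 by apply/le_anti; rewrite t0_le0 t0_ge0.
by rewrite Psi_eq// subee.
Qed.

Lemma quasiYoung_lbound : exists m : R, forall t, (0 <= t)%R -> m%:E <= Psi t.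
Proof. by case: hPsi => Phi [_ [_ _ _ lb _]]. Qed.

Lemma quasiYoung_divr_le {K t : R} : (1 <= K)%R -> (0 <= t)%R ->
  Psi (t / K)%R <= K^-1%:E * Psi t.
Proof.
move=> K_ge1 t_ge0; have K_gt0 : (0 < K)%R by apply: lt_le_trans K_ge1.
have K_unit : K \is a GRing.unit by rewrite unitfE gt_eqF.
case: hPsi => Phi [_ [_ cvx _ _ _]].
have := cvx t 0%R K^-1%R t_ge0 (lexx _).
rewrite invr_ge0 ltW// invr_le1// K_ge1 mulr0 addr0 mulrC => /(_ isT) /le_trans; apply.
rewrite -[leRHS]adde0 leeD// mule_ge0_le0 ?quasiYoung0_le0//.
by rewrite lee_fin subr_ge0 invr_le1.
Qed.

(* Lower semicontinuity on [0, +oo) makes [Psi \o normr] lower semicontinuous. *)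
Lemma measurable_quasiYoung_norm : measurable_fun [set: R] (fun t => Psi `|t|%R).
Proof.
case: hPsi => Phi [_ [_ _ lsc _ _]].
apply: lower_semicontinuous_measurable => x a /(lsc `|x|%R (normr_ge0 _)) near_x.
exists [set y : R | (0 <= `|y|)%R -> a%:E < Psi `|y|%R].
  exact: (@norm_continuous R R^o x) _ near_x.
by move=> y /(_ (normr_ge0 _)).
Qed.

Context {d} {T : measurableType d}.

Lemma measurable_quasiYoung_comp {A : set T} {a : T -> R} :
  measurable_fun A a -> (forall x, A x -> (0 <= a x)%R) ->
  measurable_fun A (fun x => Psi (a x)).
Proof.
move=> ma a_ge0; apply: (eq_measurable_fun (fun x => Psi `|a x|%R)).
  by move=> x /set_mem Ax; rewrite ger0_norm ?a_ge0.
exact: measurableT_comp measurable_quasiYoung_norm ma.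
Qed.

Lemma integral_quasiYoung_funepos_lty (mu : {measure set T -> \bar R})
    {A : set T} {a : T -> R} :
  measurable A -> mu A < +oo -> measurable_fun A a ->
  (forall x, A x -> (0 <= a x)%R) ->
  \int[mu]_(x in A) Psi (a x) < +oo ->
  \int[mu]_(x in A) (fun x => Psi (a x))^\+ x < +oo.
Proof.
move=> mA muA ma a_ge0 int_lty.
have mPsia := measurable_quasiYoung_comp ma a_ge0.
have [m m_le] := quasiYoung_lbound.
have neg_le : \int[mu]_(x in A) (fun x => Psi (a x))^\- x <=
    \int[mu]_(x in A) (cst `|m|%:E) x.
  apply: ge0_le_integral => //; first exact: measurable_funeneg.
  move=> x Ax; rewrite funenegE ge_max lee_fin normr_ge0 andbT leeNl.
  by apply: le_trans (m_le _ (a_ge0 _ Ax)); rewrite lee_fin lerNl -normrN ler_norm.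
have neg_fin : \int[mu]_(x in A) (fun x => Psi (a x))^\- x \is a fin_num.
  rewrite ge0_fin_numE ?integral_ge0//.
  by apply: le_lt_trans neg_le _; rewrite integral_cst// lte_mul_pinfty.
have neg_lty : \int[mu]_(x in A) (fun x => Psi (a x))^\- x < +oo.
  by move: neg_fin; rewrite fin_numElt => /andP[].
by have := lte_add_pinfty int_lty neg_lty; rewrite integralE subeK.
Qed.

Lemma luxemburg_norm_lty (mu : {measure set T -> \bar R}) (D : set T)
    (f : T -> R) (l : R) :
  measurable D -> measurable_fun D f -> (0 < l)%R ->
  \int[mu]_(x in D) (fun x => Psi (`|f x| / l)%R)^\+ x < +oo ->
  luxemburg_norm mu D Psi f < +oo.
Proof.
move=> mD mf l_gt0 int_lty.
have absf_ge0 c : (0 < c)%R -> forall x, D x -> (0 <= `|f x| / c)%R.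
  by move=> c_gt0 x _; rewrite divr_ge0// ltW.
have mPsif c : (0 < c)%R -> measurable_fun D (fun x => Psi (`|f x| / c)%R).
  move=> c_gt0; apply: measurable_quasiYoung_comp (absf_ge0 c c_gt0).
  exact: measurable_normr_divr.
move: int_lty; set I := \int[mu]_(x in D) _ => int_lty.
have I_ge0 : 0 <= I by apply: integral_ge0.
have I_fin : I = (fine I)%:E by rewrite fineK// ge0_fin_numE.
set K := Num.max 1%R (fine I).
have K_ge1 : (1 <= K)%R by rewrite le_max lexx.
have K_gt0 : (0 < K)%R by apply: lt_le_trans K_ge1.
apply: (@le_lt_trans _ _ (l * K)%:E); last by rewrite ltey.
apply: ereal_inf_lbound; exists (l * K)%R => //; split; first by rewrite mulr_gt0.
rewrite integralE; apply: le_trans (leeB (lexx _) (integral_ge0 _ _)) _.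
  by move=> x _; rewrite funenegE le_max lexx orbT.
rewrite sube0; apply: (@le_trans _ _ (\int[mu]_(x in D) (K^-1%:E *
    (fun x => Psi (`|f x| / l)%R)^\+ x))).
  apply: ge0_le_integral => //.
  - by apply/measurable_funepos/mPsif; rewrite mulr_gt0.
  - apply: emeasurable_funM => //.
    exact/measurable_funepos/mPsif.
  - move=> x Dx; rewrite !funeposE ge_max; apply/andP; split; last first.
      by apply: mule_ge0; rewrite ?le_max ?lexx ?orbT// lee_fin invr_ge0 ltW.
    rewrite invfM mulrA.
    apply: le_trans (quasiYoung_divr_le K_ge1 (absf_ge0 _ l_gt0 _ Dx)) _.
    apply: lee_wpmul2l; first by rewrite lee_fin invr_ge0 ltW.
    by rewrite le_max lexx.
rewrite ge0_integralZl_EFin//; last 2 first.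
- exact/measurable_funepos/mPsif.
- by rewrite invr_ge0 ltW.
by rewrite -/I I_fin -EFinM lee_fin ler_pdivrMl// mulr1 le_max lexx orbT.
Qed.

Lemma integral_lty_superlinear (mu : {measure set T -> \bar R})
    {A : set T} {a : T -> R} :
  (fun t : R => Psi t * (t^-1)%:E) @ +oo%R --> +oo ->
  measurable A -> mu A < +oo -> measurable_fun A a ->
  (forall x, A x -> (0 <= a x)%R) ->
  \int[mu]_(x in A) Psi (a x) < +oo -> \int[mu]_(x in A) (a x)%:E < +oo.
Proof.
move=> /superlinear_ge_id[t0 t0_gt0 t0_le] mA muA ma a_ge0 int_lty.
have mPsia := measurable_quasiYoung_comp ma a_ge0.
apply: (@le_lt_trans _ _
    (\int[mu]_(x in A) (t0%:E + (fun x => Psi (a x))^\+ x))).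
  apply: ge0_le_integral => //.
  - exact/measurable_EFinP.
  - by apply: emeasurable_funD => //; exact: measurable_funepos.
  - move=> x Ax; rewrite funeposE.
    have [t0_le_a|a_lt_t0] := leP t0 (a x).
      apply: le_trans (t0_le _ t0_le_a) _; rewrite -[leLHS]add0e.
      by apply: leeD; [rewrite lee_fin ltW|rewrite le_max lexx].
    rewrite -[leLHS]adde0; apply: leeD; first by rewrite lee_fin ltW.
    by rewrite le_max lexx orbT.
rewrite ge0_integralD//; last 2 first.
- by move=> x _; rewrite lee_fin ltW.
- exact: measurable_funepos.
rewrite lte_add_pinfty ?integral_quasiYoung_funepos_lty//.
by rewrite integral_cst// lte_mul_pinfty// lee_fin ltW.
Qed.

End quasi_young.

Section product_integrals.
Context {R : realType} {d1 d2 : measure_display}.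
Context {T1 : measurableType d1} {T2 : measurableType d2}.
Variables (m1 : {sigma_finite_measure set T1 -> \bar R}).
Variables (m2 : {sigma_finite_measure set T2 -> \bar R}).
Context {A : set T1} {B : set T2}.
Hypotheses (mA : measurable A) (mB : measurable B).

Lemma measurable_fun_setX_fst {d'} {U : measurableType d'} (f : T1 -> U) :
  measurable_fun A f -> measurable_fun (A `*` B) (fun z => f z.1).
Proof.
move=> mf; apply: measurable_comp mA _ mf _; first by move=> _ [[x y] [/= Ax _] <-].
exact: measurable_funS measurableT (@subsetT _ _) measurable_fst.
Qed.

Lemma measurable_fun_setX_snd {d'} {U : measurableType d'} (g : T2 -> U) :
  measurable_fun B g -> measurable_fun (A `*` B) (fun z => g z.2).
Proof.
move=> mg; apply: measurable_comp mB _ mg _; first by move=> _ [[x y] [/= _ By] <-].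
exact: measurable_funS measurableT (@subsetT _ _) measurable_snd.
Qed.

Lemma measurable_funXM {f : T1 -> R} {g : T2 -> R} :
  measurable_fun A f -> measurable_fun B g ->
  measurable_fun (A `*` B) (fun z => f z.1 * g z.2)%R.
Proof.
move=> mf mg; apply: measurable_funM.
- exact: measurable_fun_setX_fst.
- exact: measurable_fun_setX_snd.
Qed.

Lemma integral_setXM {F : T1 -> \bar R} {G : T2 -> \bar R} :
  measurable_fun A F -> measurable_fun B G ->
  (forall x, A x -> 0 <= F x) -> (forall y, B y -> 0 <= G y) ->
  \int[m1 \x m2]_(z in A `*` B) (F z.1 * G z.2) =
  \int[m1]_(x in A) F x * \int[m2]_(y in B) G y.
Proof.
move=> mF mG F_ge0 G_ge0.
have FA_ge0 x : 0 <= (F \_ A) x.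
  by rewrite patchE; case: ifPn => // /set_mem; exact: F_ge0.
have GB_ge0 y : 0 <= (G \_ B) y.
  by rewrite patchE; case: ifPn => // /set_mem; exact: G_ge0.
have mFA : measurable_fun [set: T1] (F \_ A) by exact/(measurable_restrictT _ mA).
have mGB : measurable_fun [set: T2] (G \_ B) by exact/(measurable_restrictT _ mB).
rewrite integral_mkcond (integral_mkcond A) (integral_mkcond B).
transitivity (\int[m1 \x m2]_z ((F \_ A) z.1 * (G \_ B) z.2)).
  apply: eq_integral => -[x y] _; rewrite !patchE in_setX /=.
  by case: (x \in A); case: (y \in B); rewrite ?mule0 ?mul0e.
rewrite fubini_tonelli1 /fubini_F /=; last 2 first.
- apply: emeasurable_funM.
  + exact: measurableT_comp mFA measurable_fst.
  + exact: measurableT_comp mGB measurable_snd.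
- by move=> z; apply: mule_ge0.
under eq_integral => x _ do rewrite ge0_integralZl//.
by rewrite ge0_integralZr//; apply: integral_ge0.
Qed.

Lemma integral_funepos_setX_lty (H : T1 * T2 -> \bar R)
    (F1 F2 : T1 -> \bar R) (G1 G2 : T2 -> \bar R) :
  measurable_fun A F1 -> measurable_fun A F2 ->
  measurable_fun B G1 -> measurable_fun B G2 ->
  (forall x, A x -> 0 <= F1 x) -> (forall x, A x -> 0 <= F2 x) ->
  (forall y, B y -> 0 <= G1 y) -> (forall y, B y -> 0 <= G2 y) ->
  \int[m1]_(x in A) F1 x < +oo -> \int[m1]_(x in A) F2 x < +oo ->
  \int[m2]_(y in B) G1 y < +oo -> \int[m2]_(y in B) G2 y < +oo ->
  measurable_fun (A `*` B) H ->
  (forall z, (A `*` B) z -> H z <= F1 z.1 * G1 z.2 + F2 z.1 * G2 z.2) ->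
  \int[m1 \x m2]_(z in A `*` B) H^\+ z < +oo.
Proof.
move=> mF1 mF2 mG1 mG2 F1_ge0 F2_ge0 G1_ge0 G2_ge0 iF1 iF2 iG1 iG2 mH H_le.
have mAB : measurable (A `*` B) by exact: measurableX.
have mFG (F : T1 -> \bar R) (G : T2 -> \bar R) :
    measurable_fun A F -> measurable_fun B G ->
    measurable_fun (A `*` B) (fun z => F z.1 * G z.2).
  move=> mF mG; apply: emeasurable_funM.
  - exact: measurable_fun_setX_fst.
  - exact: measurable_fun_setX_snd.
have FG_ge0 (F : T1 -> \bar R) (G : T2 -> \bar R) :
    (forall x, A x -> 0 <= F x) -> (forall y, B y -> 0 <= G y) ->
    forall z, (A `*` B) z -> 0 <= F z.1 * G z.2.
  by move=> F_ge0 G_ge0 [x y] [/= Ax By]; rewrite mule_ge0 ?F_ge0 ?G_ge0.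
have FG1_ge0 := FG_ge0 _ _ F1_ge0 G1_ge0; have FG2_ge0 := FG_ge0 _ _ F2_ge0 G2_ge0.
apply: (@le_lt_trans _ _
    (\int[m1 \x m2]_(z in A `*` B) (F1 z.1 * G1 z.2 + F2 z.1 * G2 z.2))).
  apply: ge0_le_integral => //.
  - exact: measurable_funepos.
  - by apply: emeasurable_funD; apply: mFG.
  - move=> z ABz; rewrite funeposE ge_max H_le//=.
    by rewrite adde_ge0 ?FG1_ge0 ?FG2_ge0.
rewrite ge0_integralD//; [|exact: mFG|exact: mFG].
by rewrite !integral_setXM// lte_add_pinfty// lte_mul_pinfty// ?integral_ge0//
  ge0_fin_numE// integral_ge0.
Qed.

End product_integrals.

Lemma mule_lbound_le {R : realType} (C m : R) (u v : \bar R) : (0 <= C)%R ->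
  m%:E <= u -> m%:E <= v ->
  C%:E * u * v <= C%:E * maxe u 0 * maxe v 0 + (C * (m * m))%:E.
Proof.
move=> C_ge0 m_le_u m_le_v.
have Cmm_ge0 : 0 <= (C * (m * m))%:E by rewrite lee_fin mulr_ge0 ?sqr_ge0.
have [u_ge0|u_lt0] := leP 0 u; have [v_ge0|v_lt0] := leP 0 v.
- by rewrite leeDl.
- rewrite mule0 add0e (le_trans _ Cmm_ge0)//.
  by apply: mule_ge0_le0; [apply: mule_ge0; rewrite ?lee_fin|exact: ltW].
- rewrite mule0 mul0e add0e (le_trans _ Cmm_ge0)//.
  by apply: mule_le0_ge0 => //; apply: mule_ge0_le0; rewrite ?lee_fin// ltW.
- (* both factors lie in [m, 0), so their product is at most [m * m] *)
  rewrite !mule0 add0e.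
  move: m_le_u m_le_v u_lt0 v_lt0; case: u => [r| |] //; case: v => [s| |] //.
  rewrite !lee_fin !lte_fin => m_le_r m_le_s r_lt0 s_lt0.
  by rewrite -mulrA ler_wpM2l//; nra.
Qed.

Section orlicz_tensor.
Context {R : realType} {d1 d2 : measure_display}.
Context {T1 : measurableType d1} {T2 : measurableType d2}.
Context {m1 : {sigma_finite_measure set T1 -> \bar R}}.
Context {m2 : {sigma_finite_measure set T2 -> \bar R}}.
Context {Psi : R -> \bar R} {A : set T1} {B : set T2} {a : T1 -> R} {b : T2 -> R}.
Hypotheses (hPsi : isQuasiYoung Psi) (mA : measurable A) (mB : measurable B).
Hypotheses (m1A : m1 A < +oo) (m2B : m2 B < +oo).
Hypotheses (ma : measurable_fun A a) (mb : measurable_fun B b).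
Hypotheses (a_ge0 : forall x, A x -> (0 <= a x)%R).
Hypotheses (b_ge0 : forall y, B y -> (0 <= b y)%R).
Hypotheses (Psia_lty : \int[m1]_(x in A) Psi (a x) < +oo).
Hypotheses (Psib_lty : \int[m2]_(y in B) Psi (b y) < +oo).

Let mPsia : measurable_fun A (fun x => Psi (a x)) :=
  measurable_quasiYoung_comp hPsi ma a_ge0.
Let mPsib : measurable_fun B (fun y => Psi (b y)) :=
  measurable_quasiYoung_comp hPsi mb b_ge0.

Let mPsiab : measurable_fun (A `*` B) (fun z => Psi (a z.1 * b z.2)%R).
Proof.
apply: (measurable_quasiYoung_comp hPsi (a := fun z => a z.1 * b z.2)%R).
  exact: measurable_funXM.
by move=> [x y] [/= Ax By]; rewrite mulr_ge0 ?a_ge0 ?b_ge0.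
Qed.

Lemma integral_funepos_submult_lty {C : R} : (0 < C)%R ->
  (forall x y : R, (0 <= x)%R -> (0 <= y)%R ->
     Psi (x * y)%R <= C%:E * Psi x * Psi y) ->
  \int[m1 \x m2]_(z in A `*` B) (fun z => Psi (a z.1 * b z.2)%R)^\+ z < +oo.
Proof.
move=> C_gt0 Psi_submult; have [m m_le] := quasiYoung_lbound hPsi.
apply: (integral_funepos_setX_lty m1 m2 mA mB _
  (fun x => C%:E * (fun x => Psi (a x))^\+ x) (cst (C * (m * m))%:E)
  (fun y => Psi (b y))^\+ (cst 1)) => //.
- by apply: emeasurable_funM => //; exact: measurable_funepos.
- exact: measurable_funepos.
- by move=> x _; rewrite mule_ge0// lee_fin ltW.
- by move=> x _; rewrite lee_fin mulr_ge0 ?sqr_ge0// ltW.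
- rewrite ge0_integralZl_EFin//; last 2 first.
  + exact: measurable_funepos.
  + exact: ltW.
  by rewrite lte_mul_pinfty ?integral_quasiYoung_funepos_lty// lee_fin ltW.
- by rewrite integral_cst// lte_mul_pinfty// lee_fin mulr_ge0 ?sqr_ge0// ltW.
- exact: integral_quasiYoung_funepos_lty.
- by rewrite integral_cst// mul1e.
- move=> [x y] [/= Ax By]; rewrite !funeposE mule1 -muleA.
  apply: le_trans (Psi_submult _ _ (a_ge0 _ Ax) (b_ge0 _ By)) _; rewrite muleA.
  exact: mule_lbound_le (ltW C_gt0) (m_le _ (a_ge0 _ Ax)) (m_le _ (b_ge0 _ By)).
Qed.

Lemma integral_funepos_superlinear_lty {C1 C2 : R} : (0 <= C1)%R -> (0 <= C2)%R ->
  (forall x y : R, (0 <= x)%R -> (0 <= y)%R ->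
     Psi (x * y)%R <= (C1 * x)%:E * Psi y + Psi x * (C2 * y)%:E) ->
  (fun t : R => Psi t * (t^-1)%:E) @ +oo%R --> +oo ->
  \int[m1 \x m2]_(z in A `*` B) (fun z => Psi (a z.1 * b z.2)%R)^\+ z < +oo.
Proof.
move=> C1_ge0 C2_ge0 Psi_le Psi_superlin.
have a_lty := integral_lty_superlinear hPsi m1 Psi_superlin mA m1A ma a_ge0 Psia_lty.
have b_lty := integral_lty_superlinear hPsi m2 Psi_superlin mB m2B mb b_ge0 Psib_lty.
apply: (integral_funepos_setX_lty m1 m2 mA mB _
  (fun x => (C1 * a x)%:E) (fun x => Psi (a x))^\+
  (fun y => Psi (b y))^\+ (fun y => (C2 * b y)%:E)) => //.
- by apply/measurable_EFinP; apply: measurable_funM => //; exact: measurable_cst.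
- exact: measurable_funepos.
- exact: measurable_funepos.
- by apply/measurable_EFinP; apply: measurable_funM => //; exact: measurable_cst.
- by move=> x Ax; rewrite lee_fin mulr_ge0 ?a_ge0.
- by move=> y By; rewrite lee_fin mulr_ge0 ?b_ge0.
- under eq_integral do rewrite EFinM.
  by rewrite ge0_integralZl_EFin ?lte_mul_pinfty//; exact/measurable_EFinP.
- exact: integral_quasiYoung_funepos_lty.
- exact: integral_quasiYoung_funepos_lty.
- under eq_integral do rewrite EFinM.
  by rewrite ge0_integralZl_EFin ?lte_mul_pinfty//; exact/measurable_EFinP.
- move=> [x y] [/= Ax By]; rewrite !funeposE.
  apply: le_trans (Psi_le _ _ (a_ge0 _ Ax) (b_ge0 _ By)) _; apply: leeD.
  + by apply: lee_wpmul2l; rewrite ?lee_fin ?mulr_ge0 ?a_ge0// le_max lexx.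
  + by apply: lee_wpmul2r; rewrite ?lee_fin ?mulr_ge0 ?b_ge0// le_max lexx.
Qed.

End orlicz_tensor.

Theorem mainTheorem2 (R : realType) (d : measure_display)
  (T : measurableType d) (mu : {sigma_finite_measure set T -> \bar R})
  (Omega1 Omega2 : set T)
  (mO1 : measurable Omega1) (mO2 : measurable Omega2)
  (fO1 : mu Omega1 < +oo) (fO2 : mu Omega2 < +oo)
  (Phi : R -> \bar R) (hPhi : isQuasiYoung Phi)
  (hcond :
     (exists C : R, (0 < C)%R /\
        forall x y : R, (0 <= x)%R -> (0 <= y)%R ->
          Phi (x * y)%R <= C%:E * Phi x * Phi y)
     \/
     ((exists C1 C2 : R, (0 <= C1)%R /\ (0 <= C2)%R /\
        forall x y : R, (0 <= x)%R -> (0 <= y)%R ->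
          Phi (x * y)%R <= (C1 * x)%:E * Phi y + Phi x * (C2 * y)%:E)
      /\ (fun t : R => Phi t * (t^-1)%:E) @ +oo%R --> +oo))
  (mu1 mu2 : T -> R)
  (h1 : in_Orlicz mu Omega1 Phi mu1) (h2 : in_Orlicz mu Omega2 Phi mu2) :
  in_Orlicz (mu \x mu) (Omega1 `*` Omega2) Phi
    (fun z : T * T => (mu1 z.1 * mu2 z.2)%R).
Proof.
have [[mf1 _] [mf2 _]] := (h1, h2).
have [l1 l1_gt0 int1_le1] := in_Orlicz_scale h1.
have [l2 l2_gt0 int2_le1] := in_Orlicz_scale h2.
set a := fun x => (`|mu1 x| / l1)%R; set b := fun y => (`|mu2 y| / l2)%R.
have a_ge0 x : Omega1 x -> (0 <= a x)%R by rewrite divr_ge0// ltW.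
have b_ge0 y : Omega2 y -> (0 <= b y)%R by rewrite divr_ge0// ltW.
have ma : measurable_fun Omega1 a by exact: measurable_normr_divr.
have mb : measurable_fun Omega2 b by exact: measurable_normr_divr.
have int1_lty := le_lt_trans int1_le1 (ltry 1%R).
have int2_lty := le_lt_trans int2_le1 (ltry 1%R).
split; first exact: measurable_funXM.
apply: (luxemburg_norm_lty hPhi _ _ _ (l1 * l2)%R).
- exact: measurableX.
- exact: measurable_funXM.
- by rewrite mulr_gt0.
have -> : (fun z : T * T => Phi (`|mu1 z.1 * mu2 z.2| / (l1 * l2))%R) =
    (fun z => Phi (a z.1 * b z.2)%R).
  by apply/funext => z; rewrite normrM invfM mulrACA.
case: hcond => [[C [C_gt0 Phi_submult]]|[[C1 [C2 [C1_ge0 [C2_ge0 Phi_le]]]] Phi_superlin]].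
- exact: (integral_funepos_submult_lty hPhi mO1 mO2 fO1 fO2 ma mb a_ge0 b_ge0
    int1_lty int2_lty C_gt0 Phi_submult).
- exact: (integral_funepos_superlinear_lty hPhi mO1 mO2 fO1 fO2 ma mb a_ge0 b_ge0
    int1_lty int2_lty C1_ge0 C2_ge0 Phi_le Phi_superlin).
Qed.
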